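(* Let $0\le p_1<1/2<p_2\le 1$ and $c=\min\{1/2-p_1,\,p_2-1/2\}$. Let $n\ge 4$ and $\ell$ be integers with $(1/c^2)\ln n\le \ell\le n$, and let $a\le p_1\ell$, $b\ge p_2\ell$. Then $|\mathcal{W}(n,\ell,[a,b])|\ge 2^{n-1}$.
   Context: $\mathrm{wt}(\mathbf{x})$ denotes the number of ones of a binary sequence $\mathbf{x}$. For $\mathbf{x}=x_1\dots x_n\in\{0,1\}^n$ and $\ell\le n$, the windows of size $\ell$ are $x_i\dots x_{i+\ell-1}$, $1\le i\le n-\ell+1$. For reals $a\le b$, $\mathcal{W}(n,\ell,[a,b])$ is the set of $\mathbf{x}\in\{0,1\}^n$ all of whose windows of size $\ell$ have weight in $[a,b]$. $\ln$ is the natural logarithm. *)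

From mathcomp Require Import all_boot all_order all_algebra.
From mathcomp Require Import reals exp.
Set Implicit Arguments. Unset Strict Implicit. Unset Printing Implicit Defensive.
Import Order.TTheory GRing.Theory Num.Theory.
Local Open Scope ring_scope.

(* A binary sequence x_1 ... x_n is a finite function 'I_n -> bool
   (0-indexed: x j for j < n). *)

Definition window_wt (n : nat) (x : {ffun 'I_n -> bool}) (i l : nat) : nat :=
  (\sum_(j < n | (i <= j < i + l)%N) (x j : nat))%N.

Definition W (R : realType) (n l : nat) (a b : R) : {set {ffun 'I_n -> bool}} :=
  [set x : {ffun 'I_n -> bool} |
     [forall i : 'I_n.+1, (i + l <= n)%N ==>
        ((a <= (window_wt x i l)%:R) && ((window_wt x i l)%:R <= b))]].

From mathcomp Require Import all_boot all_order all_algebra.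
From mathcomp Require Import reals exp.
From mathcomp Require Import functions filter sequences normedtype.
From mathcomp Require Import ring lra zify.
Import Order.TTheory GRing.Theory Num.Theory.
Local Open Scope ring_scope.

(* Proof idea: a union bound over windows, combined with a Chernoff bound.

   A sequence x lies outside W(n, l, [a, b]) only if some window of size l
   contains more than (1/2 + c) l zeros (its weight is below a <= (1/2 - c) l)
   or more than (1/2 + c) l ones (its weight exceeds b >= (1/2 + c) l).  For
   each window and each symbol, the exponential Markov inequality with
   parameter t = 4c, together with the product formula for the exponential
   moment of a window count and the estimate cosh y <= exp (y^2/2), bounds
   the number of such sequences by 2^n exp (-2 c^2 l) <= 2^n / n^2, because
   c^2 l >= ln n.  There are at most n windows and two symbols, hence at most
   2^(n+1) / n <= 2^(n-1) bad sequences since n >= 4. *)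

Section CoshBound.
Context {R : realType}.

Lemma exp_coeffN (y : R) k : exp_coeff (- y) k = (-1) ^+ odd k * exp_coeff y k.
Proof. by rewrite /exp_coeff /= (exprNn y) -mulrA signr_odd. Qed.

Lemma exp_coeff_sym_odd (y : R) k : odd k -> exp_coeff y k + exp_coeff (- y) k = 0.
Proof. by move=> k_odd; rewrite exp_coeffN k_odd expr1 mulN1r subrr. Qed.

Lemma exp_coeff_sym_even (y : R) j :
  exp_coeff y j.*2 + exp_coeff (- y) j.*2 = 2 * (y ^+ j.*2 / j.*2`!%:R).
Proof. by rewrite exp_coeffN odd_double expr0 mul1r /exp_coeff /=; ring. Qed.

Lemma exp_coeff_sym_ge0 (y : R) k : 0 <= exp_coeff y k + exp_coeff (- y) k.
Proof.
case/boolP: (odd k) => [/exp_coeff_sym_odd -> // | k_even].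
by rewrite -(odd_double_half k) (negbTE k_even) add0n exp_coeff_sym_even
  mulr_ge0 // divr_ge0 // exprn_even_ge0 // odd_double.
Qed.

Lemma sum_exp_coeff_sym (y : R) m :
  \sum_(0 <= k < m.*2) (exp_coeff y k + exp_coeff (- y) k) =
  \sum_(0 <= j < m) 2 * (y ^+ j.*2 / j.*2`!%:R).
Proof.
elim: m => [|m IH]; first by rewrite !big_geq.
rewrite doubleS !big_nat_recr //= -IH -addrA exp_coeff_sym_even.
by rewrite exp_coeff_sym_odd ?addr0 //= odd_double.
Qed.

Lemma exp_partial_sum_le (u : R) m : 0 <= u ->
  \sum_(0 <= j < m) u ^+ j / j`!%:R <= expR u.
Proof.
move=> u_ge0; apply: (nondecreasing_cvgn_le _ (is_cvg_series_exp_coeff u)).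
by apply: nondecreasing_series => k _ _; rewrite /exp_coeff divr_ge0 ?exprn_ge0.
Qed.

Lemma fact_double_ge j : (2 ^ j * j`! <= j.*2`!)%N.
Proof.
elim: j => [|j IH] //; rewrite doubleS !factS expnS mulnACA.
by rewrite leq_mul ?mul2n ?doubleS // (leq_trans IH) ?leq_pmull.
Qed.

Lemma even_term_le (y : R) j :
  y ^+ j.*2 / j.*2`!%:R <= (y ^+ 2 / 2) ^+ j / j`!%:R.
Proof.
have -> : (y ^+ 2 / 2) ^+ j / j`!%:R = (y ^+ 2) ^+ j / (2 ^ j * j`!)%:R.
  by rewrite exprMn exprVn natrM natrX invfM mulrA.
rewrite -exprM mul2n ler_wpM2l ?exprn_even_ge0 ?odd_double //.
by rewrite lef_pV2 ?posrE ?ltr0n ?muln_gt0 ?expn_gt0 ?fact_gt0 // ler_nat fact_double_ge.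
Qed.

Lemma cosh_le_expR (y : R) : expR y + expR (- y) <= 2 * expR (y ^+ 2 / 2).
Proof.
rewrite /expR -lim_seriesD; [|exact: is_cvg_series_exp_coeff..].
rewrite -/(expR (y ^+ 2 / 2)).
apply: limr_le; first exact: is_cvg_seriesD (is_cvg_series_exp_coeff _)
  (is_cvg_series_exp_coeff _).
apply: nearW => m /=.
have nd : nondecreasing_seq (series (exp_coeff y + exp_coeff (- y))).
  by apply: nondecreasing_series => k _ _; exact: exp_coeff_sym_ge0.
apply: (le_trans (nd m m.*2 _)); first by rewrite -addnn leq_addr.
rewrite /series /= sum_exp_coeff_sym -mulr_sumr ler_wpM2l //.
apply: (le_trans _ (exp_partial_sum_le _ _ _)); last by rewrite divr_ge0 // sqr_ge0.
by apply: ler_sum => j _; exact: even_term_le.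
Qed.

End CoshBound.

Lemma window_size {n i l : nat} : (i + l <= n)%N ->
  (\sum_(j < n | (i <= j < i + l)%N) 1 = l)%N.
Proof.
move=> fits; transitivity (\sum_(i <= j < i + l) 1)%N.
  rewrite (big_nat_widen _ _ _ _ _ fits) big_geq_mkord.
  by apply: eq_bigl => j /=; rewrite andbC.
by rewrite sum_nat_const_nat addKn muln1.
Qed.

Definition window_count {n : nat} (s : bool) (i l : nat)
    (x : {ffun 'I_n -> bool}) : nat :=
  (\sum_(j < n | (i <= j < i + l)%N) (x j == s))%N.

Lemma window_wtE {n} (x : {ffun 'I_n -> bool}) i l :
  window_wt x i l = window_count true i l x.
Proof. by apply: eq_bigr => j _; case: (x j). Qed.

Lemma window_count_compl {n} (x : {ffun 'I_n -> bool}) i l : (i + l <= n)%N ->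
  (window_count true i l x + window_count false i l x = l)%N.
Proof.
move=> fits; rewrite -big_split -[RHS](window_size fits) /=.
by apply: eq_bigr => j _; case: (x j).
Qed.

Section Chernoff.
Context {R : realType}.

Lemma card_gt_le_sum_expR {T : finType} (f : T -> R) (t theta : R) : 0 <= t ->
  (#|[set x | theta < f x]|%:R : R) <= \sum_x expR (t * (f x - theta)).
Proof.
move=> t_ge0; rewrite -sumr_const.
rewrite [X in _ <= X](bigID [in [set x | theta < f x]]) /=.
rewrite ler_wpDr ?sumr_ge0 //; first by move=> x _; exact: expR_ge0.
apply: ler_sum => x; rewrite inE => f_gt.
by apply: le_trans (expR_ge1Dx _); rewrite lerDl mulr_ge0 // subr_ge0 ltW.
Qed.

(* The exponential moment of a window count, over all sequences of length n:
   the positions outside the window contribute a factor 2, those inside a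
   factor 1 + exp t. *)
Lemma sum_expR_window_count (n i l : nat) (s : bool) (t : R) : (i + l <= n)%N ->
  \sum_(x : {ffun 'I_n -> bool}) expR (t * (window_count s i l x)%:R)
    = 2 ^+ n * ((1 + expR t) / 2) ^+ l.
Proof.
move=> fits.
pose G (j : 'I_n) (b : bool) : R :=
  if (i <= j < i + l)%N && (b == s) then expR t else 1.
have expR_countE x :
    expR (t * (window_count s i l x)%:R) = \prod_(j < n) G j (x j).
  rewrite natr_sum mulr_sumr expR_sum big_mkcond /=.
  apply: eq_bigr => j _; rewrite /G; case: (i <= j < i + l)%N => //=.
  by case: (x j == s); rewrite ?mulr1 ?mulr0 ?expR0.
under eq_bigr => x _ do rewrite expR_countE.
rewrite -bigA_distr_bigA /=.
rewrite (eq_bigr (fun j : 'I_n =>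
  2 * (if (i <= j < i + l)%N then (1 + expR t) / 2 else 1))); last first.
  move=> j _; rewrite big_bool /G /=.
  by case: (i <= j < i + l)%N; case: (s) => /=; rewrite ?mulr1 //; field.
rewrite big_split /= prodr_const card_ord -big_mkcond /= prodr_const.
by rewrite -sum1_card window_size.
Qed.

(* The one-window estimate behind the Chernoff bound:
   exp (-4c (1/2 + c)) (1 + exp (4c)) / 2 = exp (-4c^2) cosh (2c)
   <= exp (-4c^2) exp (2c^2). *)
Lemma tilted_moment_le (c : R) :
  expR (- (4 * c * (1 / 2 + c))) * ((1 + expR (4 * c)) / 2) <= expR (- (2 * c ^+ 2)).
Proof.
have cosh_le := cosh_le_expR (2 * c).
have lhsE : expR (- (4 * c * (1 / 2 + c))) * ((1 + expR (4 * c)) / 2) =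
    expR (- (4 * c ^+ 2)) * (expR (2 * c) + expR (- (2 * c))) / 2.
  rewrite mulrA [in LHS]mulrDr mulr1 [in RHS]mulrDr -!expRD [in RHS]addrC.
  by congr ((expR _ + expR _) / 2); field.
have rhsE : expR (- (2 * c ^+ 2)) = expR (- (4 * c ^+ 2)) * expR ((2 * c) ^+ 2 / 2).
  by rewrite -expRD; congr expR; field.
rewrite lhsE rhsE ler_pdivrMr // -mulrA ler_wpM2l ?expR_ge0 //.
by rewrite [_ * 2]mulrC.
Qed.

Definition heavy (n l : nat) (c : R) (s : bool) (i : nat) :
    {set {ffun 'I_n -> bool}} :=
  [set x | (1 / 2 + c) * l%:R < (window_count s i l x)%:R].

Lemma card_heavy_le (n l : nat) (c : R) (s : bool) (i : nat) :
  0 < c -> (i + l <= n)%N ->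
  (#|heavy n l c s i|%:R : R) <= 2 ^+ n * expR (- (2 * c ^+ 2)) ^+ l.
Proof.
move=> c_gt0 fits.
have t_ge0 : 0 <= 4 * c by rewrite mulr_ge0 // ltW.
apply: le_trans (card_gt_le_sum_expR (fun x => (window_count s i l x)%:R) _
  ((1 / 2 + c) * l%:R) t_ge0) _.
under eq_bigr => x _ do rewrite mulrBr addrC expRD.
rewrite -mulr_sumr sum_expR_window_count //.
have -> : expR (- (4 * c * ((1 / 2 + c) * l%:R))) = expR (- (4 * c * (1 / 2 + c))) ^+ l.
  by rewrite -expRM_natr; congr expR; ring.
rewrite mulrCA ler_wpM2l ?exprn_ge0 // -exprMn lerXn2r ?nnegrE ?tilted_moment_le //.
  by rewrite mulr_ge0 ?expR_ge0 // divr_ge0 // addr_ge0 ?expR_ge0.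
exact: expR_ge0.
Qed.

Lemma compl_W_sub_heavy {n l : nat} {a b c : R} :
  a <= (1 / 2 - c) * l%:R -> (1 / 2 + c) * l%:R <= b ->
  ~: W n l a b \subset
    \bigcup_(i : 'I_n.+1 | (i + l <= n)%N) (heavy n l c false i :|: heavy n l c true i).
Proof.
move=> a_le b_ge; apply/subsetP => x.
rewrite !inE negb_forall => /existsP [i]; rewrite negb_imply => /andP [fits bad].
apply/bigcupP; exists i => //; rewrite !inE.
have countsE := window_count_compl x i l fits.
move: bad; rewrite negb_and -!ltNge window_wtE => /orP [light | too_heavy].
- suff : (1 / 2 + c) * l%:R < (window_count false i l x)%:R by move->.
  have -> : window_count false i l x = (l - window_count true i l x)%N by lia.
  by rewrite natrB; [lra | lia].
- suff : (1 / 2 + c) * l%:R < (window_count true i l x)%:R by move->; rewrite orbT.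
  lra.
Qed.

Lemma sum_fitting_windows_le (n l : nat) (K : R) : (0 < l)%N -> 0 <= K ->
  \sum_(i : 'I_n.+1 | (i + l <= n)%N) K <= n%:R * K.
Proof.
move=> l_gt0 K_ge0; rewrite big_mkcond big_ord_recr /= ifF; last by lia.
rewrite addr0 mulr_natl -[in K *+ n](card_ord n) -sumr_const.
by apply: ler_sum => i _; case: ifP.
Qed.

Lemma card_compl_W_le {n l : nat} {a b c : R} : 0 < c -> (0 < l)%N ->
  a <= (1 / 2 - c) * l%:R -> (1 / 2 + c) * l%:R <= b ->
  (#|~: W n l a b|%:R : R) <= n%:R * (2 * (2 ^+ n * expR (- (2 * c ^+ 2)) ^+ l)).
Proof.
move=> c_gt0 l_gt0 a_le b_ge.
have union_le : (#|~: W n l a b| <= \sum_(i : 'I_n.+1 | (i + l <= n)%N)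
    (#|heavy n l c false i| + #|heavy n l c true i|))%N.
  apply: leq_trans (subset_leq_card (compl_W_sub_heavy a_le b_ge)) _.
  elim/big_ind2: _ => [|A m B k Am Bk|i _]; rewrite ?cards0 //.
    by apply: leq_trans (leq_card_setU _ _) _; exact: leq_add.
  exact: leq_card_setU.
apply: (le_trans _ (sum_fitting_windows_le _ _ _ l_gt0 _)); last first.
  by rewrite mulr_ge0 ?mulr_ge0 ?exprn_ge0 ?expR_ge0.
rewrite -(ler_nat R) natr_sum in union_le; apply: le_trans union_le _.
apply: ler_sum => i fits; rewrite natrD mulr_natl mulr2n.
by apply: lerD; apply: card_heavy_le.
Qed.

Lemma sqr_mul_expR_le1 (x y : R) (k : nat) : 0 < x -> ln x <= y * k%:R ->
  x ^+ 2 * expR (- (2 * y)) ^+ k <= 1.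
Proof.
move=> x_gt0 ln_le; rewrite -expRM_natr -[x](lnK x_gt0) -expRM_natr -expRD.
by rewrite expR_le1; lra.
Qed.

Lemma union_bound_arith (n : nat) (B : R) : (4 <= n)%N -> 0 <= B ->
  n%:R ^+ 2 * B <= 1 -> n%:R * (2 * (2 ^+ n * B)) <= 2 ^+ n.-1.
Proof.
move=> n_ge4 B_ge0 n2B_le1.
have n_ge4R : 4 <= n%:R :> R by rewrite (ler_nat R 4).
have -> : (2 : R) ^+ n = 2 * 2 ^+ n.-1 by rewrite -exprS prednK //; lia.
have -> : n%:R * (2 * (2 * 2 ^+ n.-1 * B)) = 2 ^+ n.-1 * (4 * (n%:R * B)) by ring.
rewrite -[X in _ <= X]mulr1 ler_wpM2l ?exprn_ge0 //.
have nB_ge0 : 0 <= n%:R * B by rewrite mulr_ge0.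
suff : 4 * (n%:R * B) <= n%:R * (n%:R * B) by move/le_trans; apply; rewrite mulrA -expr2.
by rewrite ler_wpM2r.
Qed.

End Chernoff.

Theorem theorem4 (R : realType) (p1 p2 : R) (n l : nat) (a b : R) :
  0 <= p1 -> p1 < 1 / 2 -> 1 / 2 < p2 -> p2 <= 1 ->
  (4 <= n)%N ->
  (let c := Num.min (1 / 2 - p1) (p2 - 1 / 2) in
   (1 / c ^+ 2) * ln (n%:R : R) <= l%:R) ->
  (l <= n)%N ->
  a <= p1 * l%:R -> p2 * l%:R <= b ->
  (2 ^ n.-1 <= #|W n l a b|)%N.
Proof.
move=> _ p1_lt p2_gt _ n_ge4 l_ge _ a_le b_ge.
set c := Num.min (1 / 2 - p1) (p2 - 1 / 2) in l_ge.
have c_le1 : c <= 1 / 2 - p1 by rewrite ge_min lexx.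
have c_le2 : c <= p2 - 1 / 2 by rewrite ge_min lexx orbT.
have c_gt0 : 0 < c by rewrite lt_min !subr_gt0 p1_lt p2_gt.
have n_gt0 : 0 < n%:R :> R by rewrite ltr0n; lia.
have ln_le : ln (n%:R : R) <= c ^+ 2 * l%:R.
  by rewrite -ler_pdivrMl ?exprn_gt0 // -div1r.
have l_gt0 : (0 < l)%N.
  have : 0 < c ^+ 2 * l%:R.
    by apply: lt_le_trans ln_le; apply: ln_gt0; rewrite ltr1n; lia.
  by rewrite pmulr_rgt0 ?exprn_gt0 // ltr0n.
have a_le' : a <= (1 / 2 - c) * l%:R by apply: (le_trans a_le); rewrite ler_wpM2r //; lra.
have b_ge' : (1 / 2 + c) * l%:R <= b by apply: le_trans b_ge; rewrite ler_wpM2r //; lra.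
have few_bad : (#|~: W n l a b| <= 2 ^ n.-1)%N.
  rewrite -(ler_nat R) natrX.
  apply: le_trans (card_compl_W_le c_gt0 l_gt0 a_le' b_ge') _.
  by apply: union_bound_arith; rewrite ?exprn_ge0 ?expR_ge0 ?sqr_mul_expR_le1.
have := cardsC (W n l a b); rewrite card_ffun card_bool card_ord.
have -> : (2 ^ n = 2 * 2 ^ n.-1)%N by rewrite -expnS prednK //; lia.
by lia.
Qed.
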